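(* Let $a\in\mathcal{Z}=\prod_{p\in\mathcal{P}}\mathbb{Z}_p$. The following are equivalent: (1) $a$ is not a zero divisor in $\mathcal{Z}$; (2) $a_p\neq0$ for every $p\in\mathcal{P}$; (3) the set $\mathbb{Q}^*_+a\cap\mathcal{Z}$ is dense in $\mathcal{Z}$.
   Context: $\mathcal{P}$ is the set of primes, $\mathbb{Z}_p$ the $p$-adic integers; $\mathcal{Z}=\prod_p\mathbb{Z}_p$ is a ring under componentwise operations with the product topology, viewed inside the finite adeles $\mathcal{A}_f$, where $\mathbb{Q}^*_+$ acts by multiplication via the diagonal embedding $r\mapsto(r)_{p}$. *)

From HB Require Import structures.
From mathcomp Require Import all_boot all_order all_algebra.
From mathcomp Require Import all_classical all_reals all_analysis.
Set Implicit Arguments. Unset Strict Implicit. Unset Printing Implicit Defensive.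
Local Open Scope classical_set_scope.

(* The p-adic integers Z_p, realized as the inverse limit of the Z/p^n:
   an element is the sequence of its residues x_n = x mod p^n (as naturals
   in [0, p^n)), with x_{n+1} mod p^n = x_n.  The topology is the inverse
   limit topology, i.e. the subspace topology inside the product of the
   discrete spaces Z/p^n (here: discrete nat), which is the p-adic topology. *)
Definition padic_seq (p : nat) : set {ptws nat -> nat} :=
  [set f | forall n : nat, (f n.+1 %% p ^ n = f n)%N].

Definition Zp (p : nat) : topologicalType := set_type (padic_seq p).

Definition Zp_digits (p : nat) (x : Zp p) : nat -> nat := set_val x.

Lemma padic_seq_mul (p : nat) (x y : Zp p) :
  padic_seq p (fun n => (Zp_digits x n * Zp_digits y n) %% p ^ n)%N.
Proof.
move=> n /=.
have hx : (Zp_digits x n.+1 %% p ^ n = Zp_digits x n)%N.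
  rewrite /Zp_digits; case: x => f hf; exact: (set_mem hf).
have hy : (Zp_digits y n.+1 %% p ^ n = Zp_digits y n)%N.
  rewrite /Zp_digits; case: y => f hf; exact: (set_mem hf).
rewrite modn_dvdm; last by rewrite expnS dvdn_mull.
by rewrite -hx -hy modnMm.
Qed.

Lemma padic_seq_nat (p k : nat) : padic_seq p (fun n => k %% p ^ n)%N.
Proof. by move=> n /=; rewrite modn_dvdm // expnS dvdn_mull. Qed.

Definition Zp_mul (p : nat) (x y : Zp p) : Zp p :=
  @exist _ (fun f => f \in padic_seq p) _ (mem_set (padic_seq_mul x y)).

Definition Zp_nat (p : nat) (k : nat) : Zp p :=
  @exist _ (fun f => f \in padic_seq p) _ (mem_set (padic_seq_nat p k)).

Definition Zp_zero (p : nat) : Zp p := Zp_nat p 0.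

Definition Prime := {p : nat | prime p}.

Definition Zhat : topologicalType := prod_topology (fun p : Prime => Zp (val p)).

Definition Zhat_mul (a b : Zhat) : Zhat := fun p => Zp_mul (a p) (b p).
Definition Zhat_nat (k : nat) : Zhat := fun p => Zp_nat (val p) k.
Definition Zhat_zero : Zhat := Zhat_nat 0.

Definition zero_divisor (a : Zhat) : Prop :=
  exists b : Zhat, b <> Zhat_zero /\ Zhat_mul a b = Zhat_zero.

(* Q*_+ a ∩ Zhat : the elements b of Zhat with b = (m/n) a in the finite
   adeles for some positive rational m/n; since the finite adeles are
   torsion free, b = (m/n) a  <->  n b = m a  (n, m positive integers). *)
Definition Qpos_orbit_cap_Zhat (a : Zhat) : set Zhat :=
  [set b | exists m n : nat, (0 < m)%N /\ (0 < n)%N /\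
           Zhat_mul (Zhat_nat n) b = Zhat_mul (Zhat_nat m) a].

From Pilot Require Import Defs.
From HB Require Import structures.
From mathcomp Require Import all_boot all_order all_algebra.
From mathcomp Require Import all_classical all_reals all_analysis.

(* Each Z_p is a domain, since a nonzero x factors as p^v u with u a unit
   (nonzero first digit); so a is a zero divisor iff some a_p = 0, and then
   a e_p = 0 for the idempotent e_p.  If a_p = 0, every b with n b = m a (n > 0)
   has b_p = 0, so the orbit misses the open set {z | z_p = 1 mod p}.  If no a_p
   vanishes, fix J and write a_p = p^(v_p) u_p for p < J.  Then
   n = prod_(p < J) p^(v_p) is a unit in Z_q for q >= J, so a = n a' with a'_p a
   unit for p < J; the Chinese remainder theorem gives m > 0 with
   m a'_p = c_p mod p^J for p < J, and b = (m/n) a = m a' lies in the orbit.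
   These b converge to c as J grows. *)

(* Re-imported so that [Zp] and [Zp_mul] denote the p-adic integers of [Defs]
   rather than the homonymous constants of [zmodp]. *)
Import Defs.

Set Implicit Arguments. Unset Strict Implicit. Unset Printing Implicit Defensive.
Local Open Scope classical_set_scope.

Lemma modn_inv u M : coprime u M -> exists i, i * u = 1 %[mod M].
Proof.
case: (posnP u) => [->|u_gt0 coUM]; first by rewrite /coprime gcd0n => /eqP ->; exists 0.
case: (egcdnP M u_gt0) => km kn kmE _; exists km.
by rewrite kmE (eqP coUM) modnMDl.
Qed.

Lemma modn_inv_unique M u i j :
  i * u = 1 %[mod M] -> j * u = 1 %[mod M] -> i = j %[mod M].
Proof.
move=> iu ju.
by rewrite -(muln1 i) -modnMmr -ju modnMmr mulnCA -modnMmr iu modnMmr muln1.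
Qed.

Lemma coprime_prodl (I : eqType) (s : seq I) (F : I -> nat) n :
  {in s, forall i, coprime (F i) n} -> coprime (\prod_(i <- s) F i) n.
Proof.
move=> coF; rewrite big_seq; apply: (big_ind (coprime^~ n)) => //.
- exact: coprime1n.
- by move=> x y cox coy; rewrite coprimeMl cox.
Qed.

Lemma chinese_seq (I : eqType) (s : seq I) (M r : I -> nat) : uniq s ->
  {in s &, forall i j, i != j -> coprime (M i) (M j)} ->
  exists x, forall i, i \in s -> x = r i %[mod M i].
Proof.
elim: s => [|i s IHs] /=; first by exists 0.
case/andP => i_notin_s uniq_s coM.
have [x xE] : exists x, forall j, j \in s -> x = r j %[mod M j].
  by apply: IHs => // j k js ks; apply: coM; rewrite inE ?js ?ks orbT.
have coMs : coprime (M i) (\prod_(j <- s) M j).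
  rewrite coprime_sym; apply: coprime_prodl => j js.
  by rewrite coM ?inE ?js ?eqxx ?orbT //; apply: contraNneq i_notin_s => <-.
exists (chinese (M i) (\prod_(j <- s) M j) (r i) x) => j.
rewrite inE => /predU1P[->|js]; first exact: chinese_modl.
have Mj_dvd : M j %| \prod_(k <- s) M k by rewrite (big_rem j) //= dvdn_mulr.
by rewrite -xE // -(modn_dvdm _ Mj_dvd) chinese_modr // modn_dvdm.
Qed.

Lemma initial_cvg (S : choiceType) (T : topologicalType) (f : S -> T)
    (F : set_system S) (s : initial_topology f) :
  Filter F -> f @ F --> f s -> F --> s.
Proof.
move=> FF fFs U [_ [[W oW <-]] /= Wfs] /filterS; apply; apply: fFs.
exact: open_nbhs_nbhs.
Qed.

Section PadicIntegers.
Variable p : nat.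
Hypothesis p_prime : prime p.

Local Notation dig := (@Zp_digits p).
Local Notation "n %:Zp" := (Zp_nat p n) (at level 2, format "n %:Zp").

Lemma Zp_digitsS (x : Zp p) n : dig x n.+1 %% p ^ n = dig x n.
Proof. by case: x => f fP; exact: (set_mem fP n). Qed.

Lemma Zp_digits_mod (x : Zp p) k n : k <= n -> dig x n %% p ^ k = dig x k.
Proof.
move=> /subnK <-; elim: (n - k) => [|i IHi]; first by rewrite -(Zp_digitsS x k) modn_mod.
by rewrite addSn -IHi -(Zp_digitsS x (i + k)) modn_dvdm // dvdn_exp2l // leq_addl.
Qed.

Lemma Zp_digits_lt (x : Zp p) k : dig x k < p ^ k.
Proof. by rewrite -(Zp_digits_mod x (leqnSn k)) ltn_pmod // expn_gt0 prime_gt0. Qed.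

Lemma Zp_digits0 (x : Zp p) : dig x 0 = 0.
Proof. by apply/eqP; rewrite -leqn0 -ltnS; exact: Zp_digits_lt x 0. Qed.

Lemma Zp_digits_inj (x y : Zp p) : (forall k, dig x k = dig y k) -> x = y.
Proof.
case: x y => [f fP] [g gP] /= fg; have ? : f = g by apply/funext.
by subst g; congr exist; exact: Prop_irrelevance.
Qed.

Lemma Zp_digits_inj_shift (x y : Zp p) e :
  (forall k, dig x (k + e) = dig y (k + e)) -> x = y.
Proof.
move=> xy; apply: Zp_digits_inj => k.
by rewrite -(Zp_digits_mod x (leq_addr e k)) xy Zp_digits_mod ?leq_addr.
Qed.

Lemma Zp_digits_mul (x y : Zp p) k : dig (Zp_mul x y) k = dig x k * dig y k %% p ^ k.
Proof. by []. Qed.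

Lemma Zp_digits_nat n k : dig n%:Zp k = n %% p ^ k.
Proof. by []. Qed.

Lemma Zp_mulC (x y : Zp p) : Zp_mul x y = Zp_mul y x.
Proof. by apply: Zp_digits_inj => k; rewrite !Zp_digits_mul mulnC. Qed.

Lemma Zp_mulA (x y z : Zp p) : Zp_mul x (Zp_mul y z) = Zp_mul (Zp_mul x y) z.
Proof. by apply: Zp_digits_inj => k; rewrite !Zp_digits_mul modnMmr modnMml mulnA. Qed.

Lemma Zp_mulCA (x y z : Zp p) : Zp_mul x (Zp_mul y z) = Zp_mul y (Zp_mul x z).
Proof. by rewrite !Zp_mulA (Zp_mulC x). Qed.

Lemma Zp_mul1 (x : Zp p) : Zp_mul 1%:Zp x = x.
Proof.
apply: Zp_digits_inj => k.
by rewrite Zp_digits_mul Zp_digits_nat modnMml mul1n modn_small ?Zp_digits_lt.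
Qed.

Lemma Zp_mul0 (x : Zp p) : Zp_mul (Zp_zero p) x = Zp_zero p.
Proof. by apply: Zp_digits_inj => k; rewrite Zp_digits_mul !Zp_digits_nat !mod0n. Qed.

Lemma Zp_mul0r (x : Zp p) : Zp_mul x (Zp_zero p) = Zp_zero p.
Proof. by rewrite Zp_mulC Zp_mul0. Qed.

Lemma Zp_natM m n : (m * n)%:Zp = Zp_mul m%:Zp n%:Zp.
Proof. by apply: Zp_digits_inj => k; rewrite Zp_digits_mul !Zp_digits_nat modnMm. Qed.

Lemma Zp_nat_neq0 n : 0 < n -> n%:Zp <> Zp_zero p.
Proof.
move=> n_gt0 /(congr1 (dig^~ n)); rewrite !Zp_digits_nat mod0n modn_small.
  by move=> n0; rewrite n0 in n_gt0.
by rewrite ltn_expl ?prime_gt1.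
Qed.

Lemma Zp_digits_pXM e (y : Zp p) k : dig (Zp_mul (p ^ e)%:Zp y) (k + e) = p ^ e * dig y k.
Proof.
rewrite Zp_digits_mul Zp_digits_nat modnMml expnD (mulnC (p ^ k)) -muln_modr.
by rewrite Zp_digits_mod ?leq_addr.
Qed.

Definition Zp_unit (x : Zp p) := dig x 1 != 0.

Lemma Zp_unitMr (x y : Zp p) : Zp_unit (Zp_mul x y) -> Zp_unit y.
Proof. by rewrite /Zp_unit Zp_digits_mul; apply: contraNneq => ->; rewrite muln0 mod0n. Qed.

Lemma Zp_unitM (x y : Zp p) : Zp_unit x -> Zp_unit y -> Zp_unit (Zp_mul x y).
Proof.
have unitE z : Zp_unit z = ~~ (p %| dig z 1).
  by rewrite /Zp_unit /dvdn modn_small //; exact: Zp_digits_lt z 1.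
rewrite !unitE Zp_digits_mul expn1 => ux uy.
by rewrite /dvdn modn_mod -/(dvdn _ _) Euclid_dvdM // negb_or ux.
Qed.

Lemma Zp_unit_coprime (x : Zp p) k : Zp_unit x -> coprime (dig x k) (p ^ k).
Proof.
case: k => [|k] ux; first by rewrite coprimen1.
rewrite coprimeXr // coprime_sym prime_coprime //; apply: contra ux.
by rewrite /Zp_unit -(Zp_digits_mod x (ltn0Sn k)) expn1.
Qed.

Lemma Zp_pX_unit_neq0 e (u : Zp p) : Zp_unit u -> Zp_mul (p ^ e)%:Zp u <> Zp_zero p.
Proof.
move=> uu /(congr1 (dig^~ (1 + e))) /eqP.
rewrite Zp_digits_pXM Zp_digits_nat mod0n muln_eq0 (negbTE uu) orbF.
by rewrite expn_eq0 eqn0Ngt prime_gt0.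
Qed.

Lemma Zp_div_pX (z : Zp p) e : dig z e = 0 -> exists y, Zp_mul (p ^ e)%:Zp y = z.
Proof.
move=> ze.
have dvd_z k : p ^ e %| dig z (k + e).
  by rewrite /dvdn Zp_digits_mod ?leq_addl ?ze.
pose f k := dig z (k + e) %/ p ^ e.
have fP : padic_seq p f.
  by move=> k; rewrite /f modn_divl -expnD Zp_digits_mod // leq_add2r.
exists (exist _ f (mem_set fP)); apply: (@Zp_digits_inj_shift _ _ e) => k.
by rewrite Zp_digits_pXM /Zp_digits /= /f mulnC divnK.
Qed.

Lemma Zp_nat_div (u : nat) (z : Zp p) : coprime u p -> exists y, Zp_mul u%:Zp y = z.
Proof.
move=> coup.
pose f k := sval (cid (modn_inv (coprimeXr k coup))) %% p ^ k.
have fK k : f k * u = 1 %[mod p ^ k].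
  by rewrite modnMml (svalP (cid (modn_inv (coprimeXr k coup)))).
have fP : padic_seq p f.
  move=> k; apply: etrans (modn_mod _ _); apply: modn_inv_unique (fK k).
  have pk_dvd : p ^ k %| p ^ k.+1 by rewrite dvdn_exp2l.
  by rewrite -(modn_dvdm _ pk_dvd) fK modn_dvdm.
pose w : Zp p := exist _ f (mem_set fP).
have uw : Zp_mul u%:Zp w = 1%:Zp.
  apply: Zp_digits_inj => k; rewrite Zp_digits_mul !Zp_digits_nat modnMml mulnC.
  exact: fK.
by exists (Zp_mul w z); rewrite Zp_mulA uw Zp_mul1.
Qed.

Lemma Zp_factor (x : Zp p) : x <> Zp_zero p ->
  exists v (u : Zp p), Zp_unit u /\ Zp_mul (p ^ v)%:Zp u = x.
Proof.
move=> x0.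
have nz : exists n, dig x n.+1 != 0.
  apply: contrapT => /forallNP allz; apply: x0; apply: Zp_digits_inj => -[|n].
    by rewrite Zp_digits0.
  by rewrite Zp_digits_nat mod0n; apply/eqP/negPn/negP/allz.
case: (ex_minnP nz) => v xv vmin.
have xv0 : dig x v = 0.
  case: v xv vmin => [_ _|v _ vmin]; first exact: Zp_digits0.
  by apply/eqP; apply: contraTT (leqnn v) => /vmin; rewrite ltnn.
have [u pu] := Zp_div_pX xv0; exists v, u; split=> //.
by move: xv; rewrite -pu -add1n Zp_digits_pXM muln_eq0 negb_or => /andP[].
Qed.

Lemma Zp_mul_neq0 (x y : Zp p) :
  x <> Zp_zero p -> y <> Zp_zero p -> Zp_mul x y <> Zp_zero p.
Proof.
move=> /Zp_factor[v [x' [ux' <-]]] /Zp_factor[w [y' [uy' <-]]].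
rewrite -Zp_mulA (Zp_mulCA x') Zp_mulA -Zp_natM -expnD.
exact/Zp_pX_unit_neq0/Zp_unitM.
Qed.

End PadicIntegers.

Lemma coprime_Prime (q r : Prime) : q != r -> coprime (val q) (val r).
Proof. by move=> qr; rewrite prime_coprime ?(valP q) // dvdn_prime2 ?(valP q) ?(valP r). Qed.

Lemma coprime_prod_rem (P : seq Prime) (v : Prime -> nat) q : uniq P ->
  coprime (\prod_(r <- rem q P) val r ^ v r) (val q).
Proof.
move=> uP; apply: coprime_prodl => r; rewrite mem_rem_uniq // inE => /andP[rq _].
exact/coprimeXl/coprime_Prime.
Qed.

Lemma Zhat_unit_part (a : Zhat) (P : seq Prime) : uniq P ->
  (forall q, a q <> Zp_zero (val q)) ->
  exists n (a' : Zhat),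
    [/\ 0 < n, Zhat_mul (Zhat_nat n) a' = a & forall q, q \in P -> Zp_unit (a' q)].
Proof.
move=> uP a_neq0.
have /choice[v vP] : forall q : Prime, exists v, exists2 u : Zp (val q),
    Zp_unit u & Zp_mul (Zp_nat _ (val q ^ v)) u = a q.
  by move=> q; have [v [u [uu uE]]] := Zp_factor (valP q) (a_neq0 q); exists v, u.
pose n := \prod_(r <- P) val r ^ v r.
have a'P q : exists2 y : Zp (val q), Zp_mul (Zp_nat _ n) y = a q & q \in P -> Zp_unit y.
  have coq := coprime_prod_rem v q uP.
  case: (boolP (q \in P)) => qP; last first.
    have [y ay] := Zp_nat_div (valP q) (a q) coq.
    by exists y; rewrite // /n -(rem_id qP).
  have [u uu uE] := vP q; have [y uy] := Zp_nat_div (valP q) u coq.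
  exists y => [|_]; last by move: uu; rewrite -uy; apply: Zp_unitMr.
  by rewrite /n (big_rem q qP) /= Zp_natM -Zp_mulA uy.
exists n, (fun q => s2val (cid2 (a'P q))); split.
- by apply: prodn_gt0 => r; rewrite expn_gt0 prime_gt0 ?(valP r).
- by apply: functional_extensionality_dep => q; exact: s2valP (cid2 (a'P q)).
- by move=> q; exact: s2valP' (cid2 (a'P q)).
Qed.

Lemma Qpos_orbit_approx (a c : Zhat) J : (forall q, a q <> Zp_zero (val q)) ->
  exists2 b, Qpos_orbit_cap_Zhat a b &
    forall q : Prime, val q < J -> Zp_digits (b q) J = Zp_digits (c q) J.
Proof.
move=> a_neq0; pose P : seq Prime := pmap insub (iota 0 J).
have uP : uniq P by rewrite pmap_sub_uniq ?iota_uniq.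
have memP q : (q \in P) = (val q < J) by rewrite mem_pmap_sub mem_iota.
have [n [a' [n_gt0 na' ua']]] := Zhat_unit_part uP a_neq0.
have /choice[inv invP] : forall q : Prime, exists i,
    q \in P -> i * Zp_digits (a' q) J = 1 %[mod val q ^ J].
  move=> q; case: (boolP (q \in P)) => [/ua' uq|_]; last by exists 0.
  by have [i iE] := modn_inv (Zp_unit_coprime (valP q) J uq); exists i.
have [x xE] : exists x, forall q, q \in P ->
    x = inv q * Zp_digits (c q) J %[mod val q ^ J].
  apply: chinese_seq => // q r _ _ qr; exact/coprimeXl/coprimeXr/coprime_Prime.
pose m := x + \prod_(q <- P) val q ^ J.
have mE q : q \in P -> m = x %[mod val q ^ J].
  by move=> qP; rewrite /m (big_rem q qP) /= mulnC addnC modnMDl.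
exists (Zhat_mul (Zhat_nat m) a').
  exists m, n; split; last split => //.
    by rewrite /m addn_gt0 prodn_gt0 ?orbT // => q; rewrite expn_gt0 prime_gt0 ?(valP q).
  by rewrite -na'; apply: functional_extensionality_dep => q; exact: Zp_mulCA.
move=> q; rewrite -memP => qP.
rewrite Zp_digits_mul Zp_digits_nat modnMml -modnMml mE // xE // modnMml.
rewrite mulnAC -modnMml invP // modnMml mul1n modn_small //.
exact: Zp_digits_lt (valP q) (c q) J.
Qed.

Lemma Zhat_cvg_digits (b : nat -> Zhat) (c : Zhat) :
  (forall q k, \forall j \near \oo, Zp_digits (b j q) k = Zp_digits (c q) k) ->
  b @ \oo --> c.
Proof.
move=> bc; apply/cvg_sup => q; apply: initial_cvg; apply: initial_cvg.
apply/pointwise_cvgP => k U /= /nbhs_singleton Uck.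
by apply: filterS (bc q k) => j; rewrite /Zp_digits /= => ->.
Qed.

Lemma Zhat_digits_continuous (q : Prime) k :
  continuous (fun a : Zhat => Zp_digits (a q) k).
Proof.
have val_cont : continuous (set_val : Zp (val q) -> {ptws nat -> nat}).
  exact: initial_continuous.
have proj_cont : continuous (fun a : Zhat => a q).
  exact: (@proj_continuous Prime (fun p => Zp (val p)) q).
have digit_cont : continuous (fun f : {ptws nat -> nat} => f k).
  exact: (@proj_continuous nat (fun=> nat) k).
move=> a; exact: continuous_comp (proj_cont a) (continuous_comp (val_cont _) (digit_cont _)).
Qed.

Lemma Qpos_orbit_dense (a : Zhat) : (forall q, a q <> Zp_zero (val q)) ->
  dense (Qpos_orbit_cap_Zhat a).
Proof.
move=> a_neq0 O [c Oc] oO.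
have /choice[b bP] : forall J, exists b, Qpos_orbit_cap_Zhat a b /\
    forall q : Prime, val q < J -> Zp_digits (b q) J = Zp_digits (c q) J.
  by move=> J; have [b ab bc] := Qpos_orbit_approx c J a_neq0; exists b.
have b_cvg : b @ \oo --> c.
  apply: Zhat_cvg_digits => q k; exists (maxn (val q).+1 k) => // J /=.
  rewrite geq_max => /andP[qJ kJ].
  by rewrite -(Zp_digits_mod (b J q) kJ) -(Zp_digits_mod (c q) kJ) (bP J).2.
have [J _ bO] := b_cvg O (open_nbhs_nbhs (conj oO Oc)).
by exists (b J); split; [exact: bO J (leqnn J) | exact: (bP J).1].
Qed.

Lemma Qpos_orbit_not_dense (a : Zhat) (q : Prime) : a q = Zp_zero (val q) ->
  ~ dense (Qpos_orbit_cap_Zhat a).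
Proof.
move=> aq0 a_dense.
have q_gt1 : 1 < val q := prime_gt1 (valP q).
have [z [zq1 [m [n [_ [n_gt0 nz]]]]]] :
    [set z : Zhat | Zp_digits (z q) 1 = 1] `&` Qpos_orbit_cap_Zhat a !=set0.
  apply: a_dense; first by exists (Zhat_nat 1); rewrite /= Zp_digits_nat modn_small.
  apply: (@open_comp _ _ (fun z : Zhat => Zp_digits (z q) 1) [set 1]).
    by move=> z _; exact: Zhat_digits_continuous.
  exact: discrete_open.
have zq0 : z q = Zp_zero (val q).
  apply: contrapT => zq_neq0; move: (congr1 (fun w : Zhat => w q) nz).
  rewrite /Zhat_mul aq0 Zp_mul0r.
  exact: Zp_mul_neq0 (valP q) _ _ (Zp_nat_neq0 (valP q) n_gt0) zq_neq0.
by move: zq1; rewrite /= zq0 Zp_digits_nat mod0n.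
Qed.

Lemma Zhat_zero_divisorP (a : Zhat) :
  zero_divisor a <-> exists q : Prime, a q = Zp_zero (val q).
Proof.
split=> [[b [b_neq0 ab0]]|[q aq0]].
  apply: contrapT => /forallNP a_neq0.
  have [q bq_neq0] : exists q : Prime, b q <> Zp_zero (val q).
    apply: contrapT => /forallNP b0; apply: b_neq0.
    by apply: functional_extensionality_dep => q; apply: contrapT; exact: b0.
  move: (congr1 (fun w : Zhat => w q) ab0).
  exact: Zp_mul_neq0 (valP q) _ _ (a_neq0 q) bq_neq0.
exists (fun r : Prime => if r == q then Zp_nat (val r) 1 else Zp_zero (val r)).
split.
  move/(congr1 (fun w : Zhat => Zp_digits (w q) 1)); rewrite /= eqxx !Zp_digits_nat.
  by rewrite mod0n modn_small // prime_gt1 ?(valP q).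
apply: functional_extensionality_dep => r; rewrite /Zhat_mul.
by case: eqP => [->|_]; rewrite ?aq0 ?Zp_mul0 ?Zp_mul0r.
Qed.

Theorem lemma2p9 (a : Zhat) :
  (~ zero_divisor a <-> (forall p : Prime, a p <> Zp_zero (val p))) /\
  ((forall p : Prime, a p <> Zp_zero (val p)) <-> dense (Qpos_orbit_cap_Zhat a)).
Proof.
split; split.
- by move=> a_nzd p ap0; apply/a_nzd/Zhat_zero_divisorP; exists p.
- by move=> a_neq0 /Zhat_zero_divisorP[p]; exact: a_neq0.
- exact: Qpos_orbit_dense.
- by move=> a_dense p /Qpos_orbit_not_dense.
Qed.
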